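(* Let $k$ be a field of characteristic $0$, $L/k$ a field extension, and $S\in\mathbf{Fam}_L$ with data $a,b,t_0\in L$ (see context). Then $S$ contains a family of trisections defined over $L$ with a single free parameter $\gamma$, namely curves on $\mathcal{E}$ of the form $y=axt+bx+c(\gamma)t^3+d(\gamma)t^2+e(\gamma)t+\gamma$ with $c(\gamma),d(\gamma),e(\gamma)\in L$, each of which has a triple singularity at the point $Q=\big((at_0+b)^2/3,\ (at_0+b)^3/6+f(t_0)/(2(at_0+b)),\ t_0\big)$.
   Context: $S$ is a del Pezzo surface of degree one given in $\mathbb{P}(2,3,1,1)$, coordinates $(X:Y:Z:W)$, by $Y^2=X^3+F(Z,W)X+G(Z,W)$ with $F,G\in k[Z,W]$ homogeneous of degrees $4,6$; $f(t)=F(t,1)$, $g(t)=G(t,1)$; $\mathcal{E}:y^2=x^3+f(t)x+g(t)$ is the rational elliptic surface obtained by blowing up the base point of $|-K_S|$ ($t=Z/W$). A trisection is a member of $|-3K_S|$, realized on $\mathcal{E}$ as a curve $y=\alpha xt+\beta x+ct^3+dt^2+et+h$. $S\in\mathbf{Fam}_L$ means there exist $a,b,t_0\in L$ with $t_0\neq0$, $at_0+b\neq0$, $f(t_0)\neq-(at_0+b)^4/3$, such that $t_0$ is a double root of $P(t)=-f(t)^2/4+(at+b)^4f(t)/6+(at+b)^2g(t)+(at+b)^8/108$. *)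

From HB Require Import structures.
From mathcomp Require Import all_boot all_order all_algebra.
Set Implicit Arguments. Unset Strict Implicit. Unset Printing Implicit Defensive.
Import Order.TTheory GRing.Theory Num.Theory.
Local Open Scope ring_scope.

Section Defs.
Variable L : fieldType.

Definition Ppoly (f g : {poly L}) (a b : L) : {poly L} :=
  let l := a *: 'X + b%:P in
  - (4%:R)^-1 *: f ^+ 2 + (6%:R)^-1 *: (l ^+ 4 * f) + l ^+ 2 * g
  + (108%:R)^-1 *: l ^+ 8.

(* The defining condition of Fam_L, for the given data a b t0 (f, g already over L).
   "double root" = root of multiplicity at least 2. *)
Definition FamL_data (f g : {poly L}) (a b t0 : L) : Prop :=
  [/\ t0 != 0, a * t0 + b != 0,
      f.[t0] != - (a * t0 + b) ^+ 4 / 3%:R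
    & (('X - t0%:P) ^+ 2 %| Ppoly f g a b)%R].

(* Bivariate polynomials in (x,t): outer variable x, inner variable t. *)
Definition tvar : {poly {poly L}} := ('X : {poly L})%:P.

Definition tris_h (alpha beta c d e h0 : L) : {poly {poly L}} :=
  (alpha *: 'X + beta%:P)%:P * 'X
  + (c *: 'X ^+ 3 + d *: 'X ^+ 2 + e *: 'X + h0%:P)%:P.

(* Equation in the (x,t)-plane of the curve {y = h} on  y^2 = x^3 + f(t) x + g(t):
   H(x,t) = h(x,t)^2 - x^3 - f(t) x - g(t). *)
Definition curve_eq (f g : {poly L}) (h : {poly {poly L}}) : {poly {poly L}} :=
  h ^+ 2 - 'X ^+ 3 - f%:P * 'X - g%:P.

Definition shift2 (p : {poly {poly L}}) (x0 t0 : L) : {poly {poly L}} :=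
  map_poly (fun q : {poly L} => q \Po ('X + t0%:P)) (p \Po ('X + (x0%:P)%:P)).

Definition mult_ge (p : {poly {poly L}}) (x0 t0 : L) (m : nat) : Prop :=
  forall i j : nat, (i + j < m)%N -> ((shift2 p x0 t0)`_i)`_j = 0.

(* Since the curve is the graph y = h over
   the plane curve H = 0, its multiplicity at Q is that of H at (x0,t0). *)
Definition triple_sing_at (f g : {poly L}) (h : {poly {poly L}}) (x0 y0 t0 : L)
  : Prop :=
  [/\ (h.[x0%:P]).[t0] = y0,
      mult_ge (curve_eq f g h) x0 t0 3
    & ~ mult_ge (curve_eq f g h) x0 t0 4].

Definition Qx (a b t0 : L) : L := (a * t0 + b) ^+ 2 / 3%:R.
Definition Qy (f : {poly L}) (a b t0 : L) : L :=
  (a * t0 + b) ^+ 3 / 6%:R + f.[t0] / (2%:R * (a * t0 + b)).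

End Defs.

From HB Require Import structures.
From mathcomp Require Import all_boot all_order all_algebra.
From mathcomp Require Import ring.

Set Implicit Arguments.
Unset Strict Implicit.
Unset Printing Implicit Defensive.

Import GRing.Theory.
Local Open Scope ring_scope.

(* Put u = x - x0, v = t - t0 and l = a t + b. As h = l x + C(t) is linear in x, the
   translated curve equation is -u^3 + K2(v) u^2 + K1(v) u + K0(v), so Q is a point of
   multiplicity exactly 3 iff v | K2, v^2 | K1 and v^3 | K0. The constant terms of K2 and
   K1 determine x0 and y0 = h(Q), and the v-term of K1 determines the v-coefficient of
   h(x0, t0 + v). An identity 108 P + 108 l^2 K0 = K2^2 A + K1 B then shows that v^2 | K0
   holds automatically, because t0 is a double root of P and l(t0) != 0; the v^2 term of
   K0 is killed by the v^2-coefficient of h(x0, t0 + v). The Taylor coefficients of the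
   cubic C at t0 are thus prescribed up to order 2, and as t0 != 0 its remaining degree
   of freedom can be traded for its constant term gamma. *)

Section DvdpX.
Variable R : fieldType.
Implicit Types p : {poly R}.

Lemma dvdp_X_coef0 p : ('X %| p) = (p`_0 == 0).
Proof. by rewrite -[X in X %| _]subr0 -polyC0 dvdp_XsubCl /root horner_coef0. Qed.

Lemma coef_dvdp_Xn n p j : 'X^n %| p -> (j < n)%N -> p`_j = 0.
Proof. by case/dvdpP => q -> ltjn; rewrite coefMXn ltjn. Qed.

Lemma poly_split2 p : p = (p`_0)%:P + p`_1 *: 'X + drop_poly 2 p * 'X^2.
Proof.
rewrite -{1}(poly_take_drop 2 p); congr (_ + _).
apply/polyP => i; rewrite coef_take_poly coefD coefZ coefC coefX.
by case: i => [|[|i]]; rewrite /= ?(mulr0, mulr1, addr0, add0r).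
Qed.

End DvdpX.

Section CurveCoefficients.
Variable L : fieldType.
Implicit Types (lam Y Phi Psi : {poly L}) (x : L).

(* 108 times the polynomial P of Fam_L, with lam in the role of a t + b. *)
Definition fam_poly lam Phi Psi : {poly L} :=
  lam ^+ 8 - 27%:R *: Phi ^+ 2 + 18%:R *: (lam ^+ 4 * Phi) + 108%:R *: (lam ^+ 2 * Psi).

Definition xcoef2 lam x : {poly L} := lam ^+ 2 - (x *+ 3)%:P.
Definition xcoef1 lam Y Phi x : {poly L} := (lam * Y) *+ 2 - (x ^+ 2 *+ 3)%:P - Phi.
Definition xcoef0 Y Phi Psi x : {poly L} := Y ^+ 2 - (x ^+ 3)%:P - x *: Phi - Psi.

Lemma comp_fam_poly lam Phi Psi r :
  fam_poly lam Phi Psi \Po r = fam_poly (lam \Po r) (Phi \Po r) (Psi \Po r).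
Proof. by rewrite /fam_poly -!mul_polyC; ring. Qed.

Lemma fam_poly_xcoef lam Y Phi Psi x :
  fam_poly lam Phi Psi + 108%:R *: (lam ^+ 2 * xcoef0 Y Phi Psi x) =
  xcoef2 lam x ^+ 2 * (36%:R *: (lam * Y) + xcoef2 lam x * (lam ^+ 2 + (x *+ 9)%:P))
  + xcoef1 lam Y Phi x * (108%:R *: (lam * Y) - (x ^+ 2 *+ 162)%:P
      - 27%:R *: xcoef1 lam Y Phi x - 18%:R *: lam ^+ 4 + 108%:R *: (lam ^+ 2 * x%:P)).
Proof. by rewrite /fam_poly /xcoef2 /xcoef1 /xcoef0 -!mul_polyC; ring. Qed.

Lemma dvdX2_xcoef0 lam Y Phi Psi x : (108%:R : L) != 0 -> lam`_0 != 0 ->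
  'X^2 %| fam_poly lam Phi Psi -> 'X %| xcoef2 lam x -> 'X^2 %| xcoef1 lam Y Phi x ->
  'X^2 %| xcoef0 Y Phi Psi x.
Proof.
move=> n108_neq0 lam0_neq0 dvd_fam dvd2 dvd1.
have cop : coprimep 'X^2 (lam ^+ 2).
  apply/coprimep_expl/coprimep_expr; rewrite coprimep_sym -[X in coprimep _ X]subr0.
  by rewrite -polyC0 coprimep_XsubC /root horner_coef0.
rewrite -(Gauss_dvdpr _ cop) -(dvdpZr _ _ n108_neq0) -(dvdp_addr _ dvd_fam) fam_poly_xcoef.
by apply: dvdp_add; apply: dvdp_mulr => //; apply: dvdp_exp2r.
Qed.

End CurveCoefficients.

Section Translation.
Variable L : fieldType.

Lemma shift2_curve_eq (f g l C : {poly L}) (x0 t0 : L) :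
  let T := 'X + t0%:P in let lam := l \Po T in let Y := x0 *: lam + (C \Po T) in
  shift2 (curve_eq f g (l%:P * 'X + C%:P)) x0 t0 =
  - 'X^3 + (xcoef2 lam x0)%:P * 'X^2 + (xcoef1 lam Y (f \Po T) x0)%:P * 'X
  + (xcoef0 Y (f \Po T) (g \Po T) x0)%:P.
Proof.
move=> T lam Y; set rhs := RHS.
rewrite /shift2 /curve_eq !(rmorphB, rmorphD, rmorphM, rmorphXn) /= comp_polyX !comp_polyC.
rewrite !rmorphD /= map_polyX !map_polyC /= comp_polyC.
by rewrite {}/rhs /xcoef2 /xcoef1 /xcoef0 {}/Y -!mul_polyC; ring.
Qed.

Lemma horner_shift2 (l C : {poly L}) (x0 t0 : L) :
  (l%:P * 'X + C%:P).[x0%:P].[t0] =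
  (x0 *: (l \Po ('X + t0%:P)) + (C \Po ('X + t0%:P)))`_0.
Proof.
by rewrite -horner_coef0 !hornerE !horner_comp hornerD hornerX hornerC add0r mulrC.
Qed.

Lemma triple_point_of_xcoef (p : {poly {poly L}}) (x0 t0 : L) (K0 K1 K2 : {poly L}) :
  shift2 p x0 t0 = - 'X^3 + K2%:P * 'X^2 + K1%:P * 'X + K0%:P ->
  'X %| K2 -> 'X^2 %| K1 -> 'X^3 %| K0 ->
  mult_ge p x0 t0 3 /\ ~ mult_ge p x0 t0 4.
Proof.
move=> shiftE dvd2 dvd1 dvd0.
have coefE i : (shift2 p x0 t0)`_i = [:: K0; K1; K2; -1]`_i.
  rewrite shiftE !coefD coefN !coefCM !coefXn coefX coefC.
  by case: i => [|[|[|[|i]]]]; rewrite /= ?(mulr0, mulr1, addr0, add0r, oppr0, nth_nil).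
split=> [i j|/(_ 3 0 erefl)]; last first.
  by rewrite coefE coefN coef1 => /eqP; rewrite oppr_eq0 oner_eq0.
rewrite coefE; case: i => [|[|[|i]]] //= ltj.
- exact: coef_dvdp_Xn dvd0 ltj.
- exact: coef_dvdp_Xn dvd1 ltj.
- exact: coef_dvdp_Xn 1 _ _ dvd2 ltj.
Qed.

End Translation.

Lemma cubic_taylor_interpolation (L : fieldType) (t0 C0 C1 C2 : L) : t0 != 0 ->
  exists c d e : L -> L, forall gamma : L,
    (c gamma *: 'X^3 + d gamma *: 'X^2 + e gamma *: 'X + gamma%:P) \Po ('X + t0%:P)
    = C0%:P + C1 *: 'X + C2 *: 'X^2 + c gamma *: 'X^3.
Proof.
move=> t0_neq0.
pose c gamma := (C0 - C1 * t0 + C2 * t0 ^+ 2 - gamma) / t0 ^+ 3.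
exists c, (fun gamma => C2 - c gamma * t0 *+ 3),
  (fun gamma => C1 - C2 * t0 *+ 2 + c gamma * t0 ^+ 2 *+ 3) => gamma.
have C0E : C0 = c gamma * t0 ^+ 3 + C1 * t0 - C2 * t0 ^+ 2 + gamma.
  by rewrite /c divfK ?expf_neq0 //; ring.
rewrite !(comp_polyD, comp_polyZ, comp_polyM) !comp_polyX comp_polyC C0E.
by rewrite -!mul_polyC; ring.
Qed.

Section CharZero.
Variable L : fieldType.
Hypothesis charL : [pchar L] =i pred0.

Let natf_neq0 n : (n.+1%:R : L) != 0.
Proof. by rewrite (pcharf0P L).1. Qed.

Section TriplePointConditions.
Variables (a l0 x0 y0 : L) (Phi Psi : {poly L}).
Hypotheses (l0_neq0 : l0 != 0) (y0_neq0 : y0 != 0).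
Hypotheses (x0_spec : x0 *+ 3 = l0 ^+ 2) (y0_spec : (l0 * y0) *+ 2 = x0 ^+ 2 *+ 3 + Phi`_0).
Hypothesis dvdX2_fam : 'X^2 %| fam_poly (a *: 'X + l0%:P) Phi Psi.

Let lam := a *: 'X + l0%:P.
(* The v- and v^2-coefficients of h(x0, t0 + v) imposed by [xcoef1] and [xcoef0]. *)
Let Y1 := (Phi`_1 - (a * y0) *+ 2) / (l0 *+ 2).
Let Y01 := y0%:P + Y1 *: 'X.
Let Y2 := - (xcoef0 Y01 Phi Psi x0)`_2 / (y0 *+ 2).

Lemma xcoef2_dvdX : 'X %| xcoef2 lam x0.
Proof. by rewrite dvdp_X_coef0 -horner_coef0 /xcoef2 !hornerE x0_spec subrr. Qed.

Lemma xcoef1_dvdX2 Z : 'X^2 %| xcoef1 lam (Y01 + Z * 'X^2) Phi x0.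
Proof.
have Phi0E : Phi`_0 = (l0 * y0) *+ 2 - x0 ^+ 2 *+ 3 by rewrite y0_spec addrC addKr.
have Phi1E : Phi`_1 = (a * y0 + l0 * Y1) *+ 2.
  by rewrite /Y1; field; rewrite (natf_neq0 1) l0_neq0.
have -> : xcoef1 lam (Y01 + Z * 'X^2) Phi x0 =
    (((a * Y1) *+ 2)%:P + (lam * Z) *+ 2 - drop_poly 2 Phi) * 'X^2.
  by rewrite /xcoef1 {1}[Phi]poly_split2 Phi0E Phi1E /lam /Y01 -!mul_polyC; ring.
exact: dvdp_mull (dvdpp _).
Qed.

Lemma xcoef0_dvdX3 Z : 'X^3 %| xcoef0 (Y01 + (Y2%:P + Z * 'X) * 'X^2) Phi Psi x0.
Proof.
have dvdX2_Y01 : 'X^2 %| xcoef0 Y01 Phi Psi x0.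
  apply: (dvdX2_xcoef0 (natf_neq0 107) _ dvdX2_fam xcoef2_dvdX).
    by rewrite /lam coefD coefZ coefX coefC mulr0 add0r.
  by have := xcoef1_dvdX2 0; rewrite mul0r addr0.
have /dvdpP[R RE] := dvdX2_Y01.
set W := Y2%:P + Z * 'X.
have -> : xcoef0 (Y01 + W * 'X^2) Phi Psi x0 = (R + W * (Y01 *+ 2 + W * 'X^2)) * 'X^2.
  transitivity (xcoef0 Y01 Phi Psi x0 + W * (Y01 *+ 2 + W * 'X^2) * 'X^2).
    by rewrite /xcoef0; ring.
  by rewrite RE -mulrDl.
rewrite exprS; apply: dvdp_mul (dvdpp _).
have R0E : R`_0 = (xcoef0 Y01 Phi Psi x0)`_2 by rewrite RE coefMXn.
have W0E : W`_0 = Y2 by rewrite coefD coefC coefMX addr0.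
have S0E : (Y01 *+ 2 + W * 'X^2)`_0 = y0 *+ 2.
  by rewrite coefD coefMn coefMXn coefD coefC coefZ coefX mulr0 !addr0.
rewrite dvdp_X_coef0 coefD coef0M R0E W0E S0E /Y2; apply/eqP; field.
by rewrite (natf_neq0 1) y0_neq0.
Qed.

Lemma triple_point_conditions : exists C1 C2 : L, forall c : L,
  let Y := x0 *: lam + ((y0 - x0 * l0)%:P + C1 *: 'X + C2 *: 'X^2 + c *: 'X^3) in
  [/\ 'X %| xcoef2 lam x0, 'X^2 %| xcoef1 lam Y Phi x0 & 'X^3 %| xcoef0 Y Phi Psi x0].
Proof.
exists (Y1 - x0 * a), Y2 => c Y.
have -> : Y = Y01 + (Y2%:P + c%:P * 'X) * 'X^2 by rewrite /Y /Y01 /lam -!mul_polyC; ring.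
by split; [exact: xcoef2_dvdX | exact: xcoef1_dvdX2 | exact: xcoef0_dvdX3].
Qed.

End TriplePointConditions.

Section FamilyCondition.
Variables (f g : {poly L}) (a b t0 : L).
Hypothesis l0_neq0 : a * t0 + b != 0.

Let T := 'X + t0%:P.

Let coef0_comp : (f \Po T)`_0 = f.[t0].
Proof. by rewrite -horner_coef0 horner_comp !hornerE. Qed.

Lemma comp_linear_XaddC : (a *: 'X + b%:P) \Po T = a *: 'X + (a * t0 + b)%:P.
Proof. by rewrite comp_polyD comp_polyZ comp_polyX comp_polyC /T -!mul_polyC; ring. Qed.

Lemma scale_Ppoly : 108%:R *: Ppoly f g a b = fam_poly (a *: 'X + b%:P) f g.
Proof.
have k4 : 108%:R * (4%:R)^-1 = 27%:R :> L by field; rewrite (natf_neq0 3).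
have k6 : 108%:R * (6%:R)^-1 = 18%:R :> L by field; rewrite (natf_neq0 5).
have k108 : 108%:R * (108%:R)^-1 = 1 :> L by rewrite divff ?(natf_neq0 107).
rewrite /Ppoly /fam_poly !scalerDr !scalerA mulrN k4 k6 k108 scale1r -!mul_polyC.
ring.
Qed.

Lemma dvdX2_fam_poly : ('X - t0%:P) ^+ 2 %| Ppoly f g a b ->
  'X^2 %| fam_poly (a *: 'X + (a * t0 + b)%:P) (f \Po T) (g \Po T).
Proof.
move=> dvdP; rewrite -comp_linear_XaddC -comp_fam_poly -scale_Ppoly.
have <- : (('X - t0%:P) ^+ 2) \Po T = 'X^2.
  by rewrite rmorphXn /= comp_polyB comp_polyX comp_polyC addrK.
by apply: dvdp_comp_poly; rewrite dvdpZr ?(natf_neq0 107).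
Qed.

Lemma Qx_spec : Qx a b t0 *+ 3 = (a * t0 + b) ^+ 2.
Proof. by rewrite /Qx; field; rewrite (natf_neq0 2). Qed.

Lemma Qy_spec : ((a * t0 + b) * Qy f a b t0) *+ 2 = Qx a b t0 ^+ 2 *+ 3 + (f \Po T)`_0.
Proof.
rewrite coef0_comp /Qy /Qx; field.
by rewrite (natf_neq0 1) (natf_neq0 2) (natf_neq0 5) l0_neq0.
Qed.

Lemma Qy_neq0 : f.[t0] != - (a * t0 + b) ^+ 4 / 3%:R -> Qy f a b t0 != 0.
Proof.
apply: contra => /eqP Qy0; apply/eqP.
rewrite -coef0_comp -[(f \Po T)`_0](addKr (Qx a b t0 ^+ 2 *+ 3)) -Qy_spec Qy0.
by rewrite mulr0 mul0rn addr0 /Qx; field; rewrite (natf_neq0 2).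
Qed.

End FamilyCondition.

End CharZero.

Theorem lemma3p5 (k L : fieldType) (iota : {rmorphism k -> L})
  (f g : {poly k}) (a b t0 : L) :
  [pchar k] =i pred0 ->
  (size f <= 5)%N -> (size g <= 7)%N ->
  FamL_data (map_poly iota f) (map_poly iota g) a b t0 ->
  exists c d e : L -> L, forall gamma : L,
    triple_sing_at (map_poly iota f) (map_poly iota g)
      (tris_h a b (c gamma) (d gamma) (e gamma) gamma)
      (Qx a b t0) (Qy (map_poly iota f) a b t0) t0.
Proof.
move=> char_k _ _ [t0_neq0 l0_neq0 ft0_neq dvdP].
have charL : [pchar L] =i pred0 by move=> p; rewrite (fmorph_pchar iota) char_k.
set F := map_poly iota f in ft0_neq dvdP *; set G := map_poly iota g in dvdP *.
have [C1 [C2 conds]] := triple_point_conditions charL l0_neq0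
  (Qy_neq0 charL l0_neq0 ft0_neq) (Qx_spec charL a b t0) (Qy_spec charL F l0_neq0)
  (dvdX2_fam_poly charL dvdP).
have [c [d [e CE]]] :=
  cubic_taylor_interpolation (Qy F a b t0 - Qx a b t0 * (a * t0 + b)) C1 C2 t0_neq0.
exists c, d, e => gamma; have [dvd2 dvd1 dvd0] := conds (c gamma).
have := shift2_curve_eq F G (a *: 'X + b%:P)
  (c gamma *: 'X^3 + d gamma *: 'X^2 + e gamma *: 'X + gamma%:P) (Qx a b t0) t0.
rewrite /= comp_linear_XaddC CE => shiftE.
have [mult3 not_mult4] := triple_point_of_xcoef shiftE dvd2 dvd1 dvd0.
split=> //; rewrite horner_shift2 comp_linear_XaddC CE.
by rewrite !(coefD, coefZ, coefX, coefC, coefXn) /= !mulr0 !addr0; ring.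
Qed.
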